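(* Let $R_{ij},R_{ji},R_i,R_j\in SO(3)$. (1) If $\{R_{ij}^T g R_{ji} : g\in \mathbb{T}\}=\{R_i^T g R_j : g\in \mathbb{T}\}$, then there exist $g_{ij},g_{ji}\in\mathbb{T}$ and $h_{ij}\in\mathbb{O}$ such that $R_{ij}=h_{ij}g_{ij}R_i$ and $R_{ji}=h_{ij}g_{ji}R_j$. (2) If $\{R_{ij}^T g R_{ji} : g\in \mathbb{O}\}=\{R_i^T g R_j : g\in \mathbb{O}\}$, then there exist $g_{ij},g_{ji}\in\mathbb{O}$ such that $R_{ij}=g_{ij}R_i$ and $R_{ji}=g_{ji}R_j$.
   Context: In the fixed coordinate system, $\mathbb{O}$ is the group of all $3\times 3$ signed permutation matrices (exactly one nonzero entry, equal to $\pm1$, in each row and column) of determinant $1$ (24 elements), and $\mathbb{T}\subset\mathbb{O}$ is the 12-element subgroup of matrices $DP$ with $P$ the permutation matrix of an even permutation of $\{1,2,3\}$ and $D$ diagonal with entries $\pm1$ and $\det D=1$. *)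

From HB Require Import structures.
From mathcomp Require Import all_boot all_order all_algebra all_fingroup.
From mathcomp Require Import reals.
Set Implicit Arguments. Unset Strict Implicit. Unset Printing Implicit Defensive.
Import Order.TTheory GRing.Theory Num.Theory.
Local Open Scope ring_scope.

Definition SO3 {R : realType} (A : 'M[R]_3) : Prop :=
  A *m A^T = 1%:M /\ \det A = 1.

Definition inO {R : realType} (A : 'M[R]_3) : Prop :=
  [/\ (forall i, #|[set j | A i j != 0]| = 1%N),
      (forall j, #|[set i | A i j != 0]| = 1%N),
      (forall i j, A i j != 0 -> A i j = 1 \/ A i j = -1)
    & \det A = 1].

Definition inT {R : realType} (A : 'M[R]_3) : Prop :=
  exists (s : 'S_3) (d : 'rV[R]_3),
    [/\ ~~ odd_perm s,
        (forall i, d 0 i = 1 \/ d 0 i = -1),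
        \det (diag_mx d) = 1
      & A = diag_mx d *m perm_mx s].

Definition coset_set {R : realType} (G : 'M[R]_3 -> Prop) (X Y : 'M[R]_3)
  : 'M[R]_3 -> Prop :=
  fun M => exists g, G g /\ M = X^T *m g *m Y.

Definition set_eq {R : realType} (P Q : 'M[R]_3 -> Prop) : Prop :=
  forall M, P M <-> Q M.

(** Put A := Rij Ri^T and B := Rji Rj^T. The equality of the two coset sets
    says that g |-> A^T g B maps the group G (= T or O) into itself; in
    particular A^T B lies in G, so A^T g A = (A^T g B) (A^T B)^T.  For a
    coordinate half-turn D_k, the matrix A^T D_k A is therefore an even signed
    permutation matrix: a product of two elements of T in case (1), and in
    case (2) the square of A^T g A for some g in O with g^2 = D_k.  Having
    trace -1, it is again a coordinate half-turn.  A rotation whose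
    conjugation permutes the coordinate half-turns permutes the coordinate
    axes up to sign, so A lies in O.  Then h = A, g_ij = 1, g_ji = A^T B in
    (1), and g_ij = A, g_ji = B = A (A^T B) in (2). *)

From HB Require Import structures.
From mathcomp Require Import all_boot all_order all_algebra all_fingroup.
From mathcomp Require Import reals lra.
Set Implicit Arguments. Unset Strict Implicit. Unset Printing Implicit Defensive.
Import Order.TTheory GRing.Theory Num.Theory.
Local Open Scope ring_scope.

Section SignedPermutationMatrices.
Variables (R : realDomainType) (n : nat).
Implicit Types (d : 'rV[R]_n) (s : 'S_n) (A M N : 'M[R]_n).

Definition sign_row d := forall i, d 0 i = 1 \/ d 0 i = -1.

Definition signed_perm_mx d s : 'M[R]_n := diag_mx d *m perm_mx s.

Definition is_signed_perm M := exists d s, sign_row d /\ M = signed_perm_mx d s.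

Definition is_even_signed_perm M :=
  exists d s, [/\ sign_row d, ~~ odd_perm s & M = signed_perm_mx d s].

Definition half_turn_mx (k : 'I_n) : 'M[R]_n :=
  diag_mx (\row_i (if i == k then 1 else -1)).

Lemma signed_perm_mxE d s i j :
  signed_perm_mx d s i j = if s i == j then d 0 i else 0.
Proof. by rewrite /signed_perm_mx mul_diag_mx !mxE; case: eqP; rewrite ?mulr1 ?mulr0. Qed.

Lemma signed_perm_mxM d1 d2 s1 s2 :
  signed_perm_mx d1 s1 *m signed_perm_mx d2 s2 =
  signed_perm_mx (\row_i (d1 0 i * d2 0 (s1 i))) (s1 * s2)%g.
Proof.
apply/matrixP => i j; rewrite mxE (bigD1 (s1 i)) //= big1 => [|l /negbTE sil].
  by rewrite addr0 !signed_perm_mxE eqxx permM mxE; case: eqP; rewrite ?mulr0.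
by rewrite signed_perm_mxE eq_sym sil mul0r.
Qed.

Lemma signed_perm_mx_tr d s :
  (signed_perm_mx d s)^T = signed_perm_mx (\row_i d 0 (s^-1%g i)) s^-1%g.
Proof.
apply/matrixP => i j; rewrite mxE !signed_perm_mxE mxE (canF_eq (permK s)) eq_sym.
by case: eqP => // ->.
Qed.

Lemma sign_row_mul d1 d2 (f : 'I_n -> 'I_n) :
  sign_row d1 -> sign_row d2 -> sign_row (\row_i (d1 0 i * d2 0 (f i))).
Proof.
by move=> sd1 sd2 i; rewrite mxE; case: (sd1 i) => ->; case: (sd2 (f i)) => ->;
  rewrite ?mulr1 ?mulrN1 ?opprK; auto.
Qed.

Lemma sign_row_perm d (f : 'I_n -> 'I_n) : sign_row d -> sign_row (\row_i d 0 (f i)).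
Proof. by move=> sd i; rewrite mxE. Qed.

Lemma is_signed_permM M N : is_signed_perm M -> is_signed_perm N -> is_signed_perm (M *m N).
Proof.
case=> [d1 [s1 [sd1 ->]]] [d2 [s2 [sd2 ->]]]; rewrite signed_perm_mxM.
by do 2!eexists; split; last reflexivity; apply: sign_row_mul.
Qed.

Lemma is_signed_perm_tr M : is_signed_perm M -> is_signed_perm M^T.
Proof.
case=> [d [s [sd ->]]]; rewrite signed_perm_mx_tr.
by do 2!eexists; split; last reflexivity; apply: sign_row_perm.
Qed.

Lemma is_even_signed_perm_mul_tr M N :
  is_even_signed_perm M -> is_even_signed_perm N -> is_even_signed_perm (M *m N^T).
Proof.
case=> [d1 [s1 [sd1 ev1 ->]]] [d2 [s2 [sd2 ev2 ->]]].
rewrite signed_perm_mx_tr signed_perm_mxM.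
do 2!eexists; split; last reflexivity.
  by apply: sign_row_mul => //; apply: sign_row_perm.
by rewrite odd_permM odd_permV (negbTE ev1) (negbTE ev2).
Qed.

Lemma is_even_signed_perm_sqr M : is_signed_perm M -> is_even_signed_perm (M *m M).
Proof.
case=> [d [s [sd ->]]]; rewrite signed_perm_mxM.
do 2!eexists; split; last reflexivity.
  exact: sign_row_mul.
by rewrite odd_permM addbb.
Qed.

Lemma det_half_turn_mx k : \det (half_turn_mx k) = (-1) ^+ n.-1.
Proof.
rewrite det_diag (bigD1 k) //= mxE eqxx mul1r.
under eq_bigr => i /negbTE ik do rewrite mxE ik.
by rewrite prodr_const cardC1 card_ord.
Qed.

Lemma mxtrace_half_turn_mx k : \tr (half_turn_mx k) = 1 - (n.-1)%:R.
Proof.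
rewrite mxtrace_diag (bigD1 k) //= mxE eqxx.
under eq_bigr => i /negbTE ik do rewrite mxE ik.
by rewrite sumr_const cardC1 card_ord mulNrn.
Qed.

Lemma is_signed_perm_of_support M (f : 'I_n -> 'I_n) :
  injective f -> (forall i j, j != f i -> M i j = 0) ->
  (forall i, M i (f i) = 1 \/ M i (f i) = -1) -> is_signed_perm M.
Proof.
move=> finj supp sgnM; exists (\row_i M i (f i)), (perm finj).
split=> [i | ]; first by rewrite mxE.
apply/matrixP => i j; rewrite signed_perm_mxE permE mxE.
by case: eqP => [<- // | /eqP fij]; rewrite supp // eq_sym.
Qed.

Lemma signed_permP M :
  is_signed_perm M <->
  [/\ forall i, #|[set j | M i j != 0]| = 1%N,
      forall j, #|[set i | M i j != 0]| = 1%N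
    & forall i j, M i j != 0 -> M i j = 1 \/ M i j = -1].
Proof.
split=> [[d [s [sd ->]]] | [row1 col1 sgnM]].
  have supp i j : (signed_perm_mx d s i j != 0) = (s i == j).
    rewrite signed_perm_mxE; case: (s i =P j) => _; rewrite ?eqxx //.
    by case: (sd i) => ->; rewrite ?oppr_eq0 oner_eq0.
  split=> [i | j | i j].
  - suff -> : [set j | signed_perm_mx d s i j != 0] = [set s i] by rewrite cards1.
    by apply/setP => j; rewrite !inE supp eq_sym.
  - suff -> : [set i | signed_perm_mx d s i j != 0] = [set s^-1%g j] by rewrite cards1.
    by apply/setP => i; rewrite !inE supp (canF_eq (permK s)).
  - by rewrite supp => sij; rewrite signed_perm_mxE sij.
have /fin_all_exists [f rowf] : forall i, exists j, [set j | M i j != 0] = [set j].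
  by move=> i; apply/cards1P; rewrite row1.
have supp i j : (M i j != 0) = (j == f i) by rewrite -in_set1 -rowf inE.
apply: (is_signed_perm_of_support (f := f)) => [i i' fii' | i j | i].
- have /cards1P [i0 col] := introT eqP (col1 (f i)).
  have : i \in [set k | M k (f i) != 0] by rewrite inE supp.
  have : i' \in [set k | M k (f i) != 0] by rewrite inE supp fii'.
  by rewrite col !inE => /eqP -> /eqP ->.
- by rewrite -supp negbK => /eqP.
- by apply: sgnM; rewrite supp.
Qed.

Lemma is_signed_perm_of_half_turn_conj A :
  A *m A^T = 1%:M ->
  (forall k, exists j, A^T *m half_turn_mx k *m A = half_turn_mx j) ->
  is_signed_perm A.
Proof.
move=> AAt conj_half_turn.
have /fin_all_exists [f Af] : forall k, exists j, half_turn_mx k *m A = A *m half_turn_mx j.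
  move=> k; have [j conj_k] := conj_half_turn k.
  by exists j; rewrite -conj_k !mulmxA AAt mul1mx.
have Af_ij k i j :
    (if i == k then 1 else -1) * A i j = A i j * (if j == f k then 1 else -1).
  by have := congr1 (fun M => M i j) (Af k); rewrite mul_diag_mx mul_mx_diag !mxE.
have row_supp i j : j != f i -> A i j = 0.
  by move=> jf; move: (Af_ij i i j); rewrite eqxx (negbTE jf) => ?; lra.
have col_supp i i' : i' != i -> A i' (f i) = 0.
  by move=> i'i; move: (Af_ij i i' (f i)); rewrite eqxx (negbTE i'i) => ?; lra.
have sqr1 i : A i (f i) ^+ 2 = 1.
  have := congr1 (fun M => M i i) AAt; rewrite !mxE eqxx (bigD1 (f i)) //= big1.
    by rewrite addr0 mxE expr2.
  by move=> l lf; rewrite mxE row_supp ?mul0r.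
apply: (is_signed_perm_of_support (f := f)) => // [i i' fii' | i].
  apply/eqP; apply: contraT => ii'.
  have Ai'fi : A i' (f i) = 0 by apply: col_supp; rewrite eq_sym.
  by move: (sqr1 i'); rewrite -fii' Ai'fi expr2 mul0r => /eqP; rewrite eq_sym oner_eq0.
by have /eqP := sqr1 i; rewrite sqrf_eq1 => /orP[]/eqP; auto.
Qed.

End SignedPermutationMatrices.

Arguments half_turn_mx {R n} k.

Lemma ord3_cases (i : 'I_3) : [\/ i = 0, i = 1 | i = 2%:R].
Proof.
by case: i => [[|[|[|//]]] ?]; [constructor 1 | constructor 2 | constructor 3];
  apply: val_inj.
Qed.

Lemma ord3_cover (i a b x : 'I_3) :
  i != a -> i != b -> a != b -> [|| x == i, x == a | x == b].
Proof.
by case: i a b x => [[|[|[|//]]] ?] [[|[|[|//]]] ?] [[|[|[|//]]] ?] [[|[|[|//]]] ?].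
Qed.

Lemma sum_ord3 (V : nmodType) (F : 'I_3 -> V) : \sum_i F i = F 0 + F 1 + F 2%:R.
Proof.
by rewrite !big_ord_recl big_ord0 addr0 addrA; congr (F _ + F _ + F _); apply: val_inj.
Qed.

Lemma even_perm3_fixpoint (s : 'S_3) i : ~~ odd_perm s -> s i = i -> s = 1%g.
Proof.
move=> even_s si; apply/permP => j; rewrite perm1; apply/eqP; apply: contraT => sj.
have ij : i != j by apply: contra sj => /eqP <-; rewrite si.
have isj : i != s j by rewrite -{1}si (inj_eq perm_inj).
have jsj : j != s j by rewrite eq_sym.
have ssj : s (s j) = j.
  case/or3P: (ord3_cover (s (s j)) ij isj jsj) => /eqP //.
    by rewrite -si => /perm_inj sji; rewrite sji eqxx in isj.
  by move/perm_inj/eqP; rewrite (negbTE sj).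
have s_tperm : s = tperm j (s j).
  apply/permP => x; case/or3P: (ord3_cover x ij isj jsj) => /eqP ->.
  - by rewrite si tpermD // eq_sym.
  - by rewrite tpermL.
  - by rewrite tpermR ssj.
by move: even_s; rewrite s_tperm odd_tperm jsj.
Qed.

Section HalfTurns.
Variable R : realDomainType.
Implicit Types (X A : 'M[R]_3).

Lemma half_turn_of_even_signed_perm X :
  is_even_signed_perm X -> \tr X = -1 -> exists j, X = half_turn_mx j.
Proof.
case=> d [s [sd even_s ->]] trX.
have s1 : s = 1%g.
  apply/eqP; apply: contraT => s_neq1; move: trX; rewrite /mxtrace big1 => [|i _].
    by move/eqP; rewrite eq_sym oppr_eq0 oner_eq0.
  rewrite signed_perm_mxE; case: eqP => // /(even_perm3_fixpoint even_s) s_eq1.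
  by rewrite s_eq1 eqxx in s_neq1.
suff [j dj] : exists j, forall i, d 0 i = if i == j then 1 else -1.
  exists j; rewrite s1 /signed_perm_mx perm_mx1 mulmx1; congr diag_mx.
  by apply/rowP => i; rewrite dj mxE.
move: trX; rewrite s1 /signed_perm_mx perm_mx1 mulmx1 mxtrace_diag sum_ord3.
case: (sd 0) (sd 1) (sd 2%:R) => d0 [] d1 [] d2; rewrite d0 d1 d2 => tr;
  try (clear -tr; lra);
  [exists 0 | exists 1 | exists 2%:R]; by move=> i; case: (ord3_cases i) => ->.
Qed.

Lemma is_signed_perm_of_even_half_turn_conj A :
  A *m A^T = 1%:M ->
  (forall k, is_even_signed_perm (A^T *m half_turn_mx k *m A)) ->
  is_signed_perm A.
Proof.
move=> AAt even_conj; apply: is_signed_perm_of_half_turn_conj => // k.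
apply: half_turn_of_even_signed_perm => //.
by rewrite mxtrace_mulC mulmxA AAt mul1mx mxtrace_half_turn_mx /=; lra.
Qed.

End HalfTurns.

Section TetrahedralOctahedral.
Variable R : realType.
Implicit Types (g h X Y A B : 'M[R]_3).

Lemma inOP g : inO g <-> is_signed_perm g /\ \det g = 1.
Proof.
rewrite signed_permP.
by split=> [[row1 col1 sgn det1] | [[row1 col1 sgn] det1]].
Qed.

Lemma inO1 : inO (1%:M : 'M[R]_3).
Proof.
apply/inOP; split; last exact: det1.
exists (const_mx 1), 1%g; rewrite /signed_perm_mx perm_mx1 mulmx1 diag_const_mx.
by split=> // i; rewrite mxE; left.
Qed.

Lemma inOM g h : inO g -> inO h -> inO (g *m h).
Proof.
move=> /inOP[sg dg] /inOP[sh dh]; apply/inOP.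
by split; [apply: is_signed_permM | rewrite det_mulmx dg dh mulr1].
Qed.

Lemma inT_even_signed_perm g : inT g -> is_even_signed_perm g.
Proof. by case=> s [d [even_s sd _ ->]]; exists d, s. Qed.

Lemma inT1 : inT (1%:M : 'M[R]_3).
Proof.
exists 1%g, (const_mx 1); rewrite perm_mx1 mulmx1 diag_const_mx det1 odd_perm1.
by split=> // i; rewrite mxE; left.
Qed.

Lemma half_turn_inT k : inT (half_turn_mx k : 'M[R]_3).
Proof.
exists 1%g, (\row_i (if i == k then 1 else -1)); split.
- by rewrite odd_perm1.
- by move=> i; rewrite mxE; case: ifP; auto.
- by rewrite det_half_turn_mx expr2 mulrNN mulr1.
- by rewrite perm_mx1 mulmx1.
Qed.

Lemma half_turn_sqrt_inO k :
  exists g, inO g /\ g *m g = (half_turn_mx k : 'M[R]_3).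
Proof.
have [a [b [ka kb ab]]] : exists a b : 'I_3, [/\ k != a, k != b & a != b].
  by case: (ord3_cases k) => ->; [exists 1, 2%:R | exists 0, 2%:R | exists 0, 1].
pose d : 'rV[R]_3 := \row_i (if i == a then -1 else 1).
exists (signed_perm_mx d (tperm a b)); split.
  apply/inOP; split.
    by exists d, (tperm a b); split=> // i; rewrite mxE; case: ifP; auto.
  rewrite det_mulmx det_perm odd_tperm ab det_diag (bigD1 a) //= big1 => [|i /negbTE ia].
    by rewrite mxE eqxx mulr1 expr1 mulrNN mulr1.
  by rewrite mxE ia.
rewrite signed_perm_mxM tperm2 /signed_perm_mx perm_mx1 mulmx1; congr diag_mx.
have [ak bk ba] : [/\ a != k, b != k & b != a] by split; rewrite eq_sym.
apply/rowP => i; rewrite !mxE; case/or3P: (ord3_cover i ka kb ab) => /eqP ->.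
- by rewrite tpermD // (negbTE ka) eqxx mulr1.
- by rewrite tpermL eqxx (negbTE ba) (negbTE ak) mulr1.
- by rewrite tpermR eqxx (negbTE ba) (negbTE bk) mul1r.
Qed.

Lemma conj_eq_coset_mul_tr A B g :
  B *m B^T = 1%:M -> A^T *m g *m A = (A^T *m g *m B) *m (A^T *m B)^T.
Proof. by move=> BBt; rewrite trmx_mul trmxK !mulmxA -(mulmxA _ B) BBt mulmx1. Qed.

Lemma is_signed_perm_of_inT_coset A B :
  A *m A^T = 1%:M -> B *m B^T = 1%:M ->
  (forall g, inT g -> inT (A^T *m g *m B)) -> is_signed_perm A.
Proof.
move=> AAt BBt AgB; apply: is_signed_perm_of_even_half_turn_conj => // k.
rewrite (conj_eq_coset_mul_tr _ _ BBt).
apply: is_even_signed_perm_mul_tr; apply: inT_even_signed_perm.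
  exact/AgB/half_turn_inT.
by have := AgB _ inT1; rewrite mulmx1.
Qed.

Lemma is_signed_perm_of_inO_coset A B :
  A *m A^T = 1%:M -> B *m B^T = 1%:M ->
  (forall g, inO g -> inO (A^T *m g *m B)) -> is_signed_perm A.
Proof.
move=> AAt BBt AgB; apply: is_signed_perm_of_even_half_turn_conj => // k.
have [g [Og <-]] := half_turn_sqrt_inO k.
have -> : A^T *m (g *m g) *m A = (A^T *m g *m A) *m (A^T *m g *m A).
  by rewrite !mulmxA -(mulmxA _ A) AAt mulmx1.
apply: is_even_signed_perm_sqr; rewrite (conj_eq_coset_mul_tr _ _ BBt).
apply: is_signed_permM; last apply: is_signed_perm_tr.
  by case/inOP: (AgB _ Og).
by have /inOP[] := AgB _ inO1; rewrite mulmx1.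
Qed.

Lemma SO3_mul_tr X Y : SO3 X -> SO3 Y -> SO3 (X *m Y^T).
Proof.
move=> [XXt dX] [YYt dY]; split; last by rewrite det_mulmx det_tr dX dY mulr1.
by rewrite trmx_mul trmxK mulmxA -(mulmxA X) (mulmx1C YYt) mulmx1 XXt.
Qed.

Lemma coset_set_eq_stable (G : 'M[R]_3 -> Prop) X Y X' Y' :
  X' *m X'^T = 1%:M -> Y' *m Y'^T = 1%:M ->
  set_eq (coset_set G X Y) (coset_set G X' Y') ->
  forall g, G g -> G ((X *m X'^T)^T *m g *m (Y *m Y'^T)).
Proof.
move=> X'X't Y'Y't eqXY g Gg.
have [g' [Gg' XgY]] := (eqXY (X^T *m g *m Y)).1 (ex_intro _ g (conj Gg erefl)).
have -> : (X *m X'^T)^T *m g *m (Y *m Y'^T) = X' *m (X^T *m g *m Y) *m Y'^T.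
  by rewrite trmx_mul trmxK !mulmxA.
by rewrite XgY !mulmxA X'X't mul1mx -mulmxA Y'Y't mulmx1.
Qed.

End TetrahedralOctahedral.

Theorem corollary1 (R : realType) (Rij Rji Ri Rj : 'M[R]_3) :
  SO3 Rij -> SO3 Rji -> SO3 Ri -> SO3 Rj ->
  (set_eq (coset_set inT Rij Rji) (coset_set inT Ri Rj) ->
     exists gij gji hij,
       [/\ inT gij, inT gji, inO hij,
           Rij = hij *m gij *m Ri & Rji = hij *m gji *m Rj]) /\
  (set_eq (coset_set inO Rij Rji) (coset_set inO Ri Rj) ->
     exists gij gji,
       [/\ inO gij, inO gji, Rij = gij *m Ri & Rji = gji *m Rj]).
Proof.
move=> SOij SOji SOi SOj.
set A := Rij *m Ri^T; set B := Rji *m Rj^T.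
have [AAt detA] : SO3 A := SO3_mul_tr SOij SOi.
have [BBt _] : SO3 B := SO3_mul_tr SOji SOj.
have Rij_eq : Rij = A *m Ri by rewrite -mulmxA (mulmx1C SOi.1) mulmx1.
have Rji_eq : Rji = B *m Rj by rewrite -mulmxA (mulmx1C SOj.1) mulmx1.
have B_eq : B = A *m (A^T *m B) by rewrite mulmxA AAt mul1mx.
split=> cosets; have AgB := coset_set_eq_stable SOi.1 SOj.1 cosets.
- have OA : inO A by apply/inOP; split=> //; exact: is_signed_perm_of_inT_coset AgB.
  exists 1%:M, (A^T *m B), A; split=> //; first exact: inT1.
  + by have := AgB _ (@inT1 R); rewrite mulmx1.
  + by rewrite mulmx1.
  + by rewrite -B_eq.
- have OA : inO A by apply/inOP; split=> //; exact: is_signed_perm_of_inO_coset AgB.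
  have OB : inO B.
    by rewrite B_eq; apply: inOM => //; have := AgB _ (@inO1 R); rewrite mulmx1.
  by exists A, B.
Qed.
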